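(* Let $P, Q \subseteq \mathbb{R}^d$ be full-dimensional semi-rational polytopes and let $D \subseteq (0, \infty)$ be a dense subset such that $L_{P+w}(s) = L_{Q+w}(s)$ for all $w \in \mathbb{Z}^d$ and all $s \in D$. Then $P = Q$.
   Context: For a polytope $P \subseteq \mathbb{R}^d$ and real $s \ge 0$, $L_P(s) = \#(sP \cap \mathbb{Z}^d)$, where $sP = \{sx : x \in P\}$. A polytope is semi-rational if it can be written as $\bigcap_{i=1}^n \{x \in \mathbb{R}^d : \langle a_i, x\rangle \le b_i\}$ with all $a_i \in \mathbb{Z}^d$ and all $b_i \in \mathbb{R}$. *)

From Stdlib Require Import Reals List ZArith ClassicalEpsilon.
Import ListNotations.
Open Scope R_scope.

(* Points of R^d are represented by functions nat -> R, of which only the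
   coordinates 0 .. d-1 are relevant; subsets of R^d are predicates on them
   that only depend on those coordinates (guaranteed by the H-description). *)

Fixpoint sumR (n : nat) (f : nat -> R) : R :=
  match n with
  | O => 0
  | S m => sumR m f + f m
  end.

Definition dotZ (d : nat) (a : nat -> Z) (x : nat -> R) : R :=
  sumR d (fun k => IZR (a k) * x k).

(* A lattice point of Z^d is a list of d integers; its image in R^d. *)
Definition vecZ (z : list Z) : nat -> R := fun k => IZR (nth k z 0%Z).

Definition bounded (d : nat) (P : (nat -> R) -> Prop) : Prop :=
  exists M, forall x, P x -> forall k, (k < d)%nat -> Rabs (x k) <= M.

Definition semi_rational_polytope (d : nat) (P : (nat -> R) -> Prop) : Prop :=
  (exists (n : nat) (a : nat -> nat -> Z) (b : nat -> R),
      forall x, P x <-> (forall i, (i < n)%nat -> dotZ d (a i) x <= b i))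
  /\ bounded d P.

Definition full_dimensional (d : nat) (P : (nat -> R) -> Prop) : Prop :=
  exists x r, 0 < r /\
    forall y, (forall k, (k < d)%nat -> Rabs (y k - x k) < r) -> P y.

Definition dilate (d : nat) (s : R) (P : (nat -> R) -> Prop) : (nat -> R) -> Prop :=
  fun x => exists y, P y /\ forall k, (k < d)%nat -> x k = s * y k.

Definition translate (d : nat) (P : (nat -> R) -> Prop) (w : list Z) : (nat -> R) -> Prop :=
  fun x => exists y, P y /\ forall k, (k < d)%nat -> x k = y k + vecZ w k.

Definition lattice_card (d : nat) (P : (nat -> R) -> Prop) (s : R) (n : nat) : Prop :=
  exists l : list (list Z), length l = n /\ NoDup l /\
    forall z, In z l <-> (length z = d /\ dilate d s P (vecZ z)).

(* L_P(s) = #(sP ∩ Z^d)  (well defined for bounded P) *)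
Definition L (d : nat) (P : (nat -> R) -> Prop) (s : R) : nat :=
  epsilon (inhabits 0%nat) (fun n => lattice_card d P s n).

From Pilot Require Import Defs.
From Stdlib Require Import Reals List ZArith Lia Lra Classical ClassicalEpsilon.
Open Scope R_scope.

(* If x lies in P but not in Q, convexity and full-dimensionality of P and closedness of Q
   give a small cube B around a point x' with B inside P and disjoint from Q.  Pick s in D
   with 1/s = m + delta, where m is a large integer and 0 < delta < side of B, and a lattice
   point z with delta z in B.  For w = m z the lattice point z lies in s(P + w), because
   z/s - w = delta z.  A lattice point z' of s(Q + w) would give the point
   delta z + (z' - z)/s of Q: it lies in B if z' = z, and otherwise it is at distance more
   than 1/s - side(B) > m - side(B) from x', too far for the bounded set Q when m is large.
   Hence L_{P+w}(s) <> 0 = L_{Q+w}(s). *)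

Lemma sumR_ext n f g : (forall k, (k < n)%nat -> f k = g k) -> sumR n f = sumR n g.
Proof. induction n; intros H; simpl; auto. rewrite IHn, H; auto; intros; apply H; lia. Qed.

Lemma sumR_le n f g : (forall k, (k < n)%nat -> f k <= g k) -> sumR n f <= sumR n g.
Proof.
  induction n; intros H; simpl; [lra|].
  apply Rplus_le_compat; [apply IHn; intros|]; apply H; lia.
Qed.

Lemma sumR_ge0 n f : (forall k, 0 <= f k) -> 0 <= sumR n f.
Proof. induction n; intros H; simpl; [lra|]. specialize (IHn H). specialize (H n). lra. Qed.

Lemma sumR_ge_term n f k : (forall j, 0 <= f j) -> (k < n)%nat -> f k <= sumR n f.
Proof.
  induction n; intros H Hk; [lia|]. simpl.
  destruct (Nat.eq_dec k n) as [->|Hne].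
  - pose proof (sumR_ge0 n f H). lra.
  - assert (f k <= sumR n f) by (apply IHn; auto; lia). specialize (H n). lra.
Qed.

Lemma Rabs_sumR_le n f : Rabs (sumR n f) <= sumR n (fun k => Rabs (f k)).
Proof.
  induction n; simpl; [rewrite Rabs_R0; lra|].
  eapply Rle_trans; [apply Rabs_triang|]. lra.
Qed.

Lemma sumR_mulr n f c : sumR n (fun k => f k * c) = sumR n f * c.
Proof. induction n; simpl; [ring|]. rewrite IHn; ring. Qed.

Lemma vecZ_scale (m : Z) (z : list Z) k : vecZ (map (Z.mul m) z) k = IZR m * vecZ z k.
Proof.
  unfold vecZ. revert k; induction z as [|h z IH]; intros [|k]; simpl;
    rewrite ?mult_IZR; auto; ring.
Qed.

Lemma bounded_translate d P w : Defs.bounded d P -> Defs.bounded d (translate d P w).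
Proof.
  intros [M HM]. exists (M + sumR d (fun k => Rabs (vecZ w k))).
  intros x [y [Py Hx]] k Hk. rewrite Hx by auto.
  eapply Rle_trans; [apply Rabs_triang|]. apply Rplus_le_compat; auto.
  apply (sumR_ge_term d (fun k => Rabs (vecZ w k))); auto. intros; apply Rabs_pos.
Qed.

Lemma bounded_dilate d P s : Defs.bounded d P -> Defs.bounded d (dilate d s P).
Proof.
  intros [M HM]. exists (Rabs s * Rabs M).
  intros x [y [Py Hx]] k Hk. rewrite Hx, Rabs_mult by auto.
  apply Rmult_le_compat_l; [apply Rabs_pos|].
  eapply Rle_trans; [apply HM; eauto|apply Rle_abs].
Qed.

Lemma enumerate_filter (T : list Z -> Prop) (l : list (list Z)) :
  exists l', NoDup l' /\ forall z, In z l' <-> In z l /\ T z.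
Proof.
  set (t z := if excluded_middle_informative (T z) then true else false).
  exists (nodup (list_eq_dec Z.eq_dec) (filter t l)). split; [apply NoDup_nodup|].
  intros z. rewrite nodup_In, filter_In. unfold t.
  destruct (excluded_middle_informative (T z)); intuition discriminate.
Qed.

Lemma enumerate_Zbox (K : Z) d : exists l : list (list Z),
  forall z, length z = d -> (forall k, (k < d)%nat -> (Z.abs (nth k z 0) <= K)%Z) -> In z l.
Proof.
  set (range := map (fun i => Z.of_nat i - K)%Z (seq 0 (Z.to_nat (2 * K + 1)))).
  assert (Hrange : forall t, (Z.abs t <= K)%Z -> In t range).
  { intros t Ht. apply in_map_iff. exists (Z.to_nat (t + K)).
    split; [lia|]. apply in_seq. lia. }
  induction d as [|d [l Hl]].
  - exists (nil :: nil). intros [|h z] Hz _; [left; auto|discriminate].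
  - exists (flat_map (fun h => map (cons h) l) range).
    intros [|h z] Hz Hb; [discriminate|]. apply in_flat_map. exists h. split.
    + apply Hrange, (Hb 0%nat). lia.
    + apply in_map, Hl; [simpl in Hz; lia|]. intros k Hk. apply (Hb (S k)). lia.
Qed.

Lemma lattice_card_exists d P s : Defs.bounded d (dilate d s P) -> exists n, lattice_card d P s n.
Proof.
  intros [M HM].
  destruct (enumerate_Zbox (up (Rabs M)) d) as [box Hbox].
  destruct (enumerate_filter (fun z => length z = d /\ dilate d s P (vecZ z)) box)
    as [l [Hnd Hl]].
  exists (length l), l. split; [reflexivity|]. split; [exact Hnd|].
  intros z. rewrite Hl. split; [tauto|]. intros [Hz Hdil]. repeat split; auto.
  apply Hbox; auto. intros k Hk.
  assert (Hlt : IZR (Z.abs (nth k z 0%Z)) < IZR (up (Rabs M))).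
  { rewrite abs_IZR. eapply Rle_lt_trans; [apply (HM _ Hdil k Hk)|].
    eapply Rle_lt_trans; [apply Rle_abs|apply archimed]. }
  apply lt_IZR in Hlt. lia.
Qed.

Lemma L_eq0_iff d P s : Defs.bounded d P ->
  L d P s = 0%nat <-> forall z, length z = d -> ~ dilate d s P (vecZ z).
Proof.
  intros HP. unfold L.
  destruct (epsilon_spec (inhabits 0%nat) (fun n => lattice_card d P s n))
    as [l [Hlen [_ Hin]]].
  { apply lattice_card_exists, bounded_dilate, HP. }
  rewrite <- Hlen. split.
  - intros Hl z Hz Hdil. apply length_zero_iff_nil in Hl. subst l.
    apply (Hin z). auto.
  - intros Hno. destruct l as [|z l]; auto.
    destruct (proj1 (Hin z)) as [Hz Hdil]; [left; auto|]. exfalso; exact (Hno z Hz Hdil).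
Qed.

Definition box d (c : nat -> R) r (y : nat -> R) : Prop :=
  forall k, (k < d)%nat -> Rabs (y k - c k) < r.

Definition halfspace_intersection d (P : (nat -> R) -> Prop) : Prop :=
  exists (n : nat) (a : nat -> nat -> Z) (b : nat -> R),
    forall x, P x <-> (forall i, (i < n)%nat -> dotZ d (a i) x <= b i).

Lemma box_center d c r : 0 < r -> box d c r c.
Proof. intros Hr k _. unfold Rminus. rewrite Rplus_opp_r, Rabs_R0. exact Hr. Qed.

Lemma box_le d c r r' y : r <= r' -> box d c r y -> box d c r' y.
Proof. intros Hr Hy k Hk. specialize (Hy k Hk). lra. Qed.

Lemma dotZ_ext d a x y : (forall k, (k < d)%nat -> x k = y k) -> dotZ d a x = dotZ d a y.
Proof. intros H. apply sumR_ext. intros k Hk. rewrite H; auto. Qed.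

Lemma dotZ_lincomb d a x y al be :
  dotZ d a (fun k => al * x k + be * y k) = al * dotZ d a x + be * dotZ d a y.
Proof. unfold dotZ; induction d; simpl; [ring|]. rewrite IHd; ring. Qed.

Lemma dotZ_lipschitz d a x y r : (forall k, (k < d)%nat -> Rabs (y k - x k) <= r) ->
  Rabs (dotZ d a y - dotZ d a x) <= sumR d (fun k => Rabs (IZR (a k))) * r.
Proof.
  intros H.
  assert (E : dotZ d a y - dotZ d a x = sumR d (fun k => IZR (a k) * (y k - x k))).
  { unfold dotZ. clear H. induction d; simpl; [ring|]. rewrite <- IHd; ring. }
  rewrite E, <- sumR_mulr. eapply Rle_trans; [apply Rabs_sumR_le|].
  apply sumR_le. intros k Hk. rewrite Rabs_mult.
  apply Rmult_le_compat_l; [apply Rabs_pos|auto].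
Qed.

Section HalfspaceIntersection.

Variables (d : nat) (P : (nat -> R) -> Prop).
Hypothesis HP : halfspace_intersection d P.

Lemma halfspace_intersection_ext x y :
  (forall k, (k < d)%nat -> x k = y k) -> P x -> P y.
Proof.
  destruct HP as [n [a [b H]]]. intros Hxy Px. apply H. intros i Hi.
  rewrite <- (dotZ_ext d (a i) x y Hxy). apply H; auto.
Qed.

Lemma halfspace_intersection_convex x y lam : 0 <= lam <= 1 -> P x -> P y ->
  P (fun k => (1 - lam) * x k + lam * y k).
Proof.
  destruct HP as [n [a [b H]]]. intros Hlam Px Py. apply H. intros i Hi.
  rewrite dotZ_lincomb.
  pose proof (proj1 (H x) Px i Hi). pose proof (proj1 (H y) Py i Hi).
  assert ((1 - lam) * dotZ d (a i) x <= (1 - lam) * b i) by (apply Rmult_le_compat_l; lra).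
  assert (lam * dotZ d (a i) y <= lam * b i) by (apply Rmult_le_compat_l; lra).
  lra.
Qed.

(* A violated inequality stays violated nearby, since [dotZ] is Lipschitz. *)
Lemma halfspace_intersection_compl_open x : ~ P x ->
  exists r, 0 < r /\ forall y, box d x r y -> ~ P y.
Proof.
  destruct HP as [n [a [b H]]]. intros nPx.
  rewrite H in nPx. apply not_all_ex_not in nPx. destruct nPx as [i Hi].
  apply imply_to_and in Hi. destruct Hi as [Hi Hgap]. apply Rnot_le_gt in Hgap.
  set (g := dotZ d (a i) x - b i).
  set (C := sumR d (fun k => Rabs (IZR (a i k)))).
  assert (C0 : 0 <= C) by (apply sumR_ge0; intros; apply Rabs_pos).
  assert (r0 : 0 < g / (C + 1)) by (unfold g; apply Rdiv_lt_0_compat; lra).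
  exists (g / (C + 1)). split; [exact r0|].
  intros y Hy Py. rewrite H in Py. specialize (Py i Hi).
  pose proof (dotZ_lipschitz d (a i) x y (g / (C + 1))
                (fun k Hk => Rlt_le _ _ (Hy k Hk))) as Hlip.
  fold C in Hlip. rewrite Rabs_minus_sym in Hlip.
  assert (E : C * (g / (C + 1)) = g - g / (C + 1)) by (field; lra).
  pose proof (Rle_abs (dotZ d (a i) x - dotZ d (a i) y)).
  unfold g in *. lra.
Qed.

Lemma box_towards_incl x c rho lam : P x -> (forall y, box d c rho y -> P y) ->
  0 < lam <= 1 ->
  forall y, box d (fun k => (1 - lam) * x k + lam * c k) (lam * rho) y -> P y.
Proof.
  intros Px Hc Hlam y Hy.
  set (c' k := (y k - (1 - lam) * x k) / lam).
  assert (Pc' : P c').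
  { apply Hc. intros k Hk. specialize (Hy k Hk).
    replace (c' k - c k) with ((y k - ((1 - lam) * x k + lam * c k)) / lam)
      by (unfold c'; field; lra).
    unfold Rdiv. rewrite Rabs_mult, Rabs_inv, (Rabs_pos_eq lam) by lra.
    apply (Rmult_lt_reg_r lam); [lra|]. rewrite Rmult_assoc, Rinv_l by lra. lra. }
  apply (halfspace_intersection_ext (fun k => (1 - lam) * x k + lam * c' k)).
  - intros k _. unfold c'. field. lra.
  - apply halfspace_intersection_convex; auto; lra.
Qed.

Lemma box_incl_avoiding (Q : (nat -> R) -> Prop) x rQ :
  full_dimensional d P -> P x -> 0 < rQ -> (forall y, box d x rQ y -> ~ Q y) ->
  exists x' r, 0 < r /\ (forall y, box d x' r y -> P y) /\ (forall y, box d x' r y -> ~ Q y).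
Proof.
  intros [c [rho [rho0 Hc]]] Px rQ0 HQ.
  set (C := sumR d (fun k => Rabs (c k - x k))).
  assert (C0 : 0 <= C) by (apply sumR_ge0; intros; apply Rabs_pos).
  set (lam := Rmin (1 / 2) (rQ / 2 / (C + 1))).
  assert (lam0 : 0 < lam).
  { apply Rmin_glb_lt; [lra|]. apply Rdiv_lt_0_compat; lra. }
  assert (lam1 : lam <= 1) by (unfold lam; pose proof (Rmin_l (1 / 2) (rQ / 2 / (C + 1))); lra).
  assert (Hnear : forall k, (k < d)%nat -> Rabs (lam * (c k - x k)) < rQ / 2).
  { intros k Hk. rewrite Rabs_mult, (Rabs_pos_eq lam) by lra.
    assert (Rabs (c k - x k) <= C).
    { apply (sumR_ge_term d (fun k => Rabs (c k - x k))); auto. intros; apply Rabs_pos. }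
    assert (lam * Rabs (c k - x k) <= rQ / 2 / (C + 1) * C).
    { apply Rmult_le_compat; auto; [lra|apply Rabs_pos|apply Rmin_r]. }
    assert (rQ / 2 / (C + 1) * C < rQ / 2).
    { apply (Rmult_lt_reg_r (C + 1)); [lra|].
      replace (rQ / 2 / (C + 1) * C * (C + 1)) with (rQ / 2 * C) by (field; lra). nra. }
    lra. }
  set (r := Rmin (lam * rho) (rQ / 2)).
  exists (fun k => (1 - lam) * x k + lam * c k), r. split; [|split].
  - apply Rmin_glb_lt; [apply Rmult_lt_0_compat|]; lra.
  - intros y Hy. apply (box_towards_incl x c rho lam); auto.
    apply (box_le _ _ r); [apply Rmin_l|exact Hy].
  - intros y Hy. apply HQ. intros k Hk.
    assert (r <= rQ / 2) by apply Rmin_r.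
    pose proof (Hy k Hk). pose proof (Hnear k Hk).
    replace (y k - x k) with ((y k - ((1 - lam) * x k + lam * c k)) + lam * (c k - x k))
      by ring.
    eapply Rle_lt_trans; [apply Rabs_triang|]. lra.
Qed.

End HalfspaceIntersection.

Lemma lattice_approx d (del : R) (x : nat -> R) : 0 < del ->
  exists z : list Z, length z = d /\
    forall k, (k < d)%nat -> Rabs (vecZ z k * del - x k) < del.
Proof.
  intros del0. set (f k := (up (x k / del) - 1)%Z).
  exists (map f (seq 0 d)). split; [rewrite length_map, length_seq; auto|].
  intros k Hk. unfold vecZ.
  rewrite nth_indep with (d' := f 0%nat) by (rewrite length_map, length_seq; auto).
  rewrite map_nth, seq_nth by auto. simpl. unfold f. rewrite minus_IZR.
  destruct (archimed (x k / del)) as [Hup1 Hup2].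
  assert (E : x k = x k / del * del) by (field; lra).
  assert ((IZR (up (x k / del)) - 1) * del <= x k).
  { rewrite E at 2. apply Rmult_le_compat_r; lra. }
  assert (x k < IZR (up (x k / del)) * del).
  { rewrite E at 1. apply Rmult_lt_compat_r; lra. }
  apply Rabs_def1; lra.
Qed.

Lemma dilate_translate_intro d P s w y p : P p ->
  (forall k, (k < d)%nat -> y k = s * (p k + vecZ w k)) -> dilate d s (translate d P w) y.
Proof.
  intros Pp Hy. exists (fun k => p k + vecZ w k). split; auto.
  exists p. auto.
Qed.

Lemma dilate_translate_elim d Q s w y : s <> 0 -> dilate d s (translate d Q w) y ->
  exists q, Q q /\ forall k, (k < d)%nat -> q k = y k / s - vecZ w k.
Proof.
  intros s0 [t [[q [Qq Hq]] Hy]]. exists q. split; auto.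
  intros k Hk. rewrite Hy, Hq by auto. field. auto.
Qed.

Lemma Rabs_IZR_sub_ge1 (u v : Z) : u <> v -> 1 <= Rabs (IZR u - IZR v).
Proof. intros Huv. rewrite <- minus_IZR, Rabs_Zabs. apply IZR_le. lia. Qed.

Section Separation.

Variables (d : nat) (P Q : (nat -> R) -> Prop) (x : nat -> R) (r s : R) (m : Z) (z : list Z).
Hypothesis s0 : 0 < s.
Hypothesis Happrox : forall k, (k < d)%nat -> Rabs (vecZ z k * (/ s - IZR m) - x k) < r.

(* [z] lies in [s (P + m z)] exactly when [(1/s - m) z] lies in [P]. *)
Lemma lattice_point_dilate_translate :
  (forall y, box d x r y -> P y) -> dilate d s (translate d P (map (Z.mul m) z)) (vecZ z).
Proof.
  intros HP. apply (dilate_translate_intro d P s _ _ (fun k => vecZ z k * (/ s - IZR m))).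
  - apply HP. exact Happrox.
  - intros k _. rewrite vecZ_scale. field. lra.
Qed.

(* Any other lattice point [z'] gives the point [(1/s - m) z + (z' - z)/s] of [Q], at
   distance more than [1/s - r >= m - r] from [x]. *)
Lemma no_lattice_point_dilate_translate :
  (forall y, box d x r y -> ~ Q y) ->
  (forall q, Q q -> forall k, (k < d)%nat -> Rabs (q k - x k) + r <= IZR m) ->
  IZR m <= / s ->
  forall z', length z' = d -> ~ dilate d s (translate d Q (map (Z.mul m) z)) (vecZ z').
Proof.
  intros HQ Hfar Hms z' _ Hdil.
  destruct (dilate_translate_elim d Q s _ _ ltac:(lra) Hdil) as [q [Qq Hq]].
  assert (Eq : forall k, (k < d)%nat ->
            q k = vecZ z k * (/ s - IZR m) + (vecZ z' k - vecZ z k) / s).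
  { intros k Hk. rewrite Hq, vecZ_scale by auto. field. lra. }
  destruct (classic (forall k, (k < d)%nat -> nth k z' 0%Z = nth k z 0%Z))
    as [Hsame|Hdiff].
  - apply (HQ q); auto. intros k Hk. rewrite Eq by auto.
    unfold vecZ at 2 3. rewrite Hsame by auto. unfold Rminus at 3.
    rewrite Rplus_opp_r. unfold Rdiv. rewrite Rmult_0_l, Rplus_0_r. auto.
  - apply not_all_ex_not in Hdiff. destruct Hdiff as [k Hk].
    apply imply_to_and in Hk. destruct Hk as [Hk Hne].
    pose proof (Rabs_IZR_sub_ge1 _ _ Hne) as Hu. fold (vecZ z' k) (vecZ z k) in Hu.
    assert (Hjump : / s <= Rabs ((vecZ z' k - vecZ z k) / s)).
    { unfold Rdiv. rewrite Rabs_mult, (Rabs_pos_eq (/ s))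
        by (left; apply Rinv_0_lt_compat; lra).
      rewrite <- (Rmult_1_l (/ s)) at 1.
      apply Rmult_le_compat_r; [left; apply Rinv_0_lt_compat|]; lra. }
    pose proof (Rabs_triang_inv ((vecZ z' k - vecZ z k) / s)
                  (x k - vecZ z k * (/ s - IZR m))) as Htri.
    replace ((vecZ z' k - vecZ z k) / s - (x k - vecZ z k * (/ s - IZR m)))
      with (q k - x k) in Htri by (rewrite Eq by auto; ring).
    rewrite Rabs_minus_sym in Htri.
    pose proof (Hfar q Qq k Hk). pose proof (Happrox k Hk). lra.
Qed.

End Separation.

Lemma dense_inverse (D : R -> Prop) a r :
  (forall s, D s -> 0 < s) ->
  (forall a b, 0 <= a -> a < b -> exists s, D s /\ a < s /\ s < b) ->
  0 < a -> 0 < r -> exists s, D s /\ 0 < s /\ a < / s < a + r.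
Proof.
  intros hDpos hDdense a0 r0.
  destruct (hDdense (/ (a + r)) (/ a)) as [s [Ds [Hs1 Hs2]]].
  - left; apply Rinv_0_lt_compat; lra.
  - apply Rinv_lt_contravar; [apply Rmult_lt_0_compat|]; lra.
  - pose proof (hDpos s Ds) as s0. exists s. repeat split; auto.
    + rewrite <- (Rinv_inv a). apply Rinv_lt_contravar; auto.
      apply Rmult_lt_0_compat; auto. apply Rinv_0_lt_compat; lra.
    + rewrite <- (Rinv_inv (a + r)). apply Rinv_lt_contravar; auto.
      apply Rmult_lt_0_compat; auto. apply Rinv_0_lt_compat; lra.
Qed.

Lemma incl_of_L_translate_eq (d : nat) (P Q : (nat -> R) -> Prop) (D : R -> Prop)
  (hP : semi_rational_polytope d P) (hPf : full_dimensional d P)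
  (hQ : semi_rational_polytope d Q)
  (hDpos : forall s, D s -> 0 < s)
  (hDdense : forall a b, 0 <= a -> a < b -> exists s, D s /\ a < s /\ s < b)
  (hL : forall (w : list Z) (s : R), length w = d -> D s ->
          L d (translate d P w) s = L d (translate d Q w) s) :
  forall x : nat -> R, P x -> Q x.
Proof.
  destruct hP as [hPh [MP HMP]]. destruct hQ as [hQh [MQ HMQ]].
  intros x0 Px0. apply NNPP. intros nQx0.
  destruct (halfspace_intersection_compl_open d Q hQh x0 nQx0) as [rQ [rQ0 HrQ]].
  destruct (box_incl_avoiding d P hPh Q x0 rQ hPf Px0 rQ0 HrQ)
    as [x [r [r0 [HPbox HQbox]]]].
  set (m := up (Rabs MP + Rabs MQ + r)).
  assert (Hm : Rabs MP + Rabs MQ + r < IZR m) by apply archimed.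
  assert (Hfar : forall q, Q q -> forall k, (k < d)%nat -> Rabs (q k - x k) + r <= IZR m).
  { intros q Qq k Hk.
    pose proof (HMQ q Qq k Hk). pose proof (HMP x (HPbox x (box_center d x r r0)) k Hk).
    pose proof (Rabs_triang (q k) (- x k)). rewrite Rabs_Ropp in *.
    pose proof (Rle_abs MP). pose proof (Rle_abs MQ). unfold Rminus. lra. }
  assert (m0 : 0 < IZR m) by (pose proof (Rabs_pos MP); pose proof (Rabs_pos MQ); lra).
  destruct (dense_inverse D (IZR m) r hDpos hDdense m0 r0) as [s [Ds [s0 [Hs1 Hs2]]]].
  destruct (lattice_approx d (/ s - IZR m) x ltac:(lra)) as [z [Hz Happrox]].
  assert (Happrox' : forall k, (k < d)%nat -> Rabs (vecZ z k * (/ s - IZR m) - x k) < r).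
  { intros k Hk. specialize (Happrox k Hk). lra. }
  set (w := map (Z.mul m) z).
  assert (Hw : length w = d) by (unfold w; rewrite length_map; auto).
  assert (LP : L d (translate d P w) s <> 0%nat).
  { rewrite L_eq0_iff by (apply bounded_translate; exists MP; auto).
    intros Hno. apply (Hno z Hz).
    apply (lattice_point_dilate_translate d P x r s m z s0 Happrox' HPbox). }
  apply LP. rewrite hL by auto.
  apply L_eq0_iff; [apply bounded_translate; exists MQ; auto|].
  apply (no_lattice_point_dilate_translate d Q x r s m z s0 Happrox' HQbox Hfar); lra.
Qed.

Theorem corollary4p4 (d : nat) (P Q : (nat -> R) -> Prop) (D : R -> Prop)
  (hP : semi_rational_polytope d P) (hPf : full_dimensional d P)
  (hQ : semi_rational_polytope d Q) (hQf : full_dimensional d Q)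
  (hDpos : forall s, D s -> 0 < s)
  (hDdense : forall a b, 0 <= a -> a < b -> exists s, D s /\ a < s /\ s < b)
  (hL : forall (w : list Z) (s : R), length w = d -> D s ->
          L d (translate d P w) s = L d (translate d Q w) s) :
  forall x : nat -> R, P x <-> Q x.
Proof.
  intros x. split.
  - apply (incl_of_L_translate_eq d P Q D hP hPf hQ hDpos hDdense hL).
  - apply (incl_of_L_translate_eq d Q P D hQ hQf hP hDpos hDdense).
    intros w s Hw Ds. symmetry. auto.
Qed.
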